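(* Let $S=S(c,r)\subset\mathbb{R}^{n+1}$ be the sphere of center $c$ and radius $r$, and let $\mathcal{V}=\{V_1,\dots,V_s\}$ be a finite collection of codimension-one affine subspaces of $\mathbb{R}^{n+1}$ all containing $c$. Let $x,y\in S$ with $\mathcal{V}_x=\mathcal{V}_y$ and $y\in S_\alpha(x)$, where $S_\alpha=S_\alpha(x)$ is the stratum of $x$. Then for every $\epsilon>0$ the stratifications $(\partial_{rel}F_\alpha(x,\epsilon),\mathcal{V}_x)$ and $(\partial_{rel}F_\alpha(y,\epsilon),\mathcal{V}_y)$ are isometric.
   Context: For $x\in S$, $\mathcal{V}_x$ is the set of $V_i\in\mathcal{V}$ containing $x$. For $\alpha\subset\{1,\dots,s\}$, $V_\alpha=\bigcap_{i\in\alpha}V_i$ (with $V_\emptyset=\mathbb{R}^{n+1}$) and $S_\alpha=S\cap V_\alpha$ (a great sphere). The stratum $S_\alpha(x)$ of $x$ is the lowest-dimensional $S_\alpha$ containing $x$ (namely $S\cap\bigcap_{V_i\in\mathcal{V}_x}V_i$). For $z\in S_\alpha$ and $\epsilon>0$, write $W_\alpha$ for the linear subspace orthogonal to the direction space of $V_\alpha$; the relative boundary of the spherical cap with top $z$ is $\partial_{rel}F_\alpha(z,\epsilon)=\{p\in S: p-c=t(z-c)+u,\ t>0,\ u\in W_\alpha,\ \|u\|=\epsilon\}$; it is a Euclidean sphere (possibly empty) whose center lies on the line $c+\mathbb{R}(z-c)\subset V_\alpha$. A pair $(\Sigma,\mathcal{W})$ of a Euclidean sphere $\Sigma$ and a finite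 collection $\mathcal{W}$ of affine hyperplanes is a stratification; here $\mathcal{V}_x$ induces the stratification of $\partial_{rel}F_\alpha(x,\epsilon)$ given by the intersections of this sphere with members of $\mathcal{V}_x$. Two stratifications $(\Sigma_1,\mathcal{W}_1)$, $(\Sigma_2,\mathcal{W}_2)$ are isometric if there is a bijection $j:\mathcal{W}_1\to\mathcal{W}_2$ and an orthogonal affine map $O$ with $O(\Sigma_1)=\Sigma_2$ and $O(\Sigma_1\cap W)=\Sigma_2\cap j(W)$ for every $W\in\mathcal{W}_1$. *)

(* R : realType, points of R^{n+1} are row vectors 'rV[R]_n.+1 *)
From HB Require Import structures.
From mathcomp Require Import all_boot all_order all_algebra.
From mathcomp Require Import classical_sets functions reals.
Set Implicit Arguments. Unset Strict Implicit. Unset Printing Implicit Defensive.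
Import Order.TTheory GRing.Theory Num.Theory.
Local Open Scope ring_scope.
Local Open Scope classical_set_scope.

Section Defs.
Variables (R : realType) (n : nat).
Notation pt := 'rV[R]_n.+1.

Definition dotp (u v : pt) : R := (u *m v^T) 0 0.
Definition enorm (u : pt) : R := Num.sqrt (dotp u u).

Definition sphere (c : pt) (r : R) : set pt := [set p | enorm (p - c) = r].

Definition affine_hyperplane (H : set pt) : Prop :=
  exists (a : pt) (b : R), a != 0 /\ H = [set p | dotp a p = b].

(* V_alpha = intersection of V_i, i in alpha (V_empty = whole space) *)
Definition Valpha s (V : 'I_s -> set pt) (alpha : set 'I_s) : set pt :=
  \bigcap_(i in alpha) V i.

Definition Salpha s (c : pt) (r : R) (V : 'I_s -> set pt) (alpha : set 'I_s) : set pt :=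
  sphere c r `&` Valpha V alpha.

(* index set of the hyperplanes containing x; the stratum of x is S_(idx x) *)
Definition idx s (V : 'I_s -> set pt) (x : pt) : set 'I_s := [set i | V i x].

Definition Vcoll s (V : 'I_s -> set pt) (x : pt) : set (set pt) := V @` idx V x.

Definition direction (A : set pt) : set pt := [set p - q | p in A & q in A].

Definition Walpha s (V : 'I_s -> set pt) (alpha : set 'I_s) : set pt :=
  [set u | forall v, direction (Valpha V alpha) v -> dotp u v = 0].

(* relative boundary of the spherical cap with top z *)
Definition relbd s (c : pt) (r : R) (V : 'I_s -> set pt) (alpha : set 'I_s)
    (z : pt) (eps : R) : set pt :=
  [set p | sphere c r p /\ exists (t : R) (u : pt),
     [/\ 0 < t, Walpha V alpha u, enorm u = eps & p - c = t *: (z - c) + u]].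

Definition orth_affine (O : pt -> pt) : Prop :=
  exists (Q : 'M[R]_n.+1) (b : pt), Q *m Q^T = 1%:M /\ forall p, O p = p *m Q + b.

Definition isometric_strat (S1 : set pt) (W1 : set (set pt))
    (S2 : set pt) (W2 : set (set pt)) : Prop :=
  exists (j : set pt -> set pt) (O : pt -> pt),
    [/\ set_bij W1 W2 j, orth_affine O, O @` S1 = S2 &
        forall W, W1 W -> O @` (S1 `&` W) = S2 `&` j W].

End Defs.

From HB Require Import structures.
From mathcomp Require Import all_boot all_order all_algebra.
From mathcomp Require Import classical_sets functions reals.
From mathcomp Require Import ring.
Import Order.TTheory GRing.Theory Num.Theory.
Local Open Scope ring_scope.
Local Open Scope classical_set_scope.
Set Implicit Arguments. Unset Strict Implicit. Unset Printing Implicit Defensive.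

(** The Householder reflection in the hyperplane through [c] bisecting [x - c] and
   [y - c] is an orthogonal affine map exchanging [x] and [y].  Its mirror direction
   [x - y] lies in the direction space of [V_alpha], so the reflection fixes
   [W_alpha] pointwise and maps the cap boundary at [x] onto the one at [y]; every
   hyperplane of [V_x] contains [c], [x] and [y], hence is mapped onto itself.  The
   bijection between the two collections is the identity. *)

Lemma image_involutive (T : Type) (f : T -> T) (A B : set T) :
  involutive f -> (forall p, A p -> B (f p)) -> (forall p, B p -> A (f p)) ->
  f @` A = B.
Proof.
move=> fK AB BA; apply/seteqP; split => [_ [p Ap <-]|q Bq]; first exact: AB.
by exists (f q); [apply: BA | apply: fK].
Qed.

Section Householder.
Variables (R : realType) (n : nat).
Implicit Types (u v w a : 'rV[R]_n.+1) (A : 'M[R]_n.+1).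

Lemma dotpC u v : dotp u v = dotp v u.
Proof. by rewrite /dotp -[v *m u^T]trmxK trmx_mul trmxK [in RHS]mxE. Qed.

Lemma dotpDr u v w : dotp u (v + w) = dotp u v + dotp u w.
Proof. by rewrite /dotp linearD /= mulmxDr [LHS]mxE. Qed.

Lemma dotpBr u v w : dotp u (v - w) = dotp u v - dotp u w.
Proof. by rewrite /dotp linearB /= mulmxBr [LHS]mxE [X in _ + X]mxE. Qed.

Lemma dotpBl u v w : dotp (u - v) w = dotp u w - dotp v w.
Proof. by rewrite !(dotpC _ w) dotpBr. Qed.

Lemma dotp_mulmxr u v A : dotp u (v *m A) = dotp (u *m A^T) v.
Proof. by rewrite /dotp trmx_mul mulmxA. Qed.

Lemma dotp_mx u v : u *m v^T = (dotp u v)%:M.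
Proof. exact: mx11_scalar. Qed.

Lemma dotpE u v : dotp u v = \sum_j u 0 j * v 0 j.
Proof. by rewrite /dotp mxE; apply: eq_bigr => j _; rewrite mxE. Qed.

Lemma dotp_ge0 u : 0 <= dotp u u.
Proof. by rewrite dotpE; apply: sumr_ge0 => j _; rewrite -expr2 sqr_ge0. Qed.

Lemma dotp_eq0 u : (dotp u u == 0) = (u == 0).
Proof.
apply/eqP/eqP => [|->]; last by rewrite /dotp mul0mx mxE.
rewrite dotpE => /psumr_eq0P u0; apply/rowP => j.
have /eqP := u0 (fun j _ => ltac:(by rewrite -expr2 sqr_ge0)) j isT.
by rewrite mulf_eq0 orbb mxE => /eqP.
Qed.

Lemma enorm_eq_dotp u v : enorm u = enorm v -> dotp u u = dotp v v.
Proof. by move/eqP; rewrite /enorm eqr_sqrt ?dotp_ge0 // => /eqP. Qed.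

(* For [w = 0] the coefficient [2 / 0] is [0], so [householder 0 = 1]. *)
Definition householder w : 'M[R]_n.+1 := 1%:M - (2 / dotp w w) *: (w^T *m w).

Lemma householderE v w :
  v *m householder w = v - (2 / dotp w w * dotp v w) *: w.
Proof.
by rewrite mulmxBr mulmx1 -scalemxAr mulmxA dotp_mx mul_scalar_mx scalerA.
Qed.

Lemma tr_householder w : (householder w)^T = householder w.
Proof. by rewrite /householder linearB /= tr_scalar_mx linearZ /= trmx_mul trmxK. Qed.

Lemma householderK w : householder w *m householder w = 1%:M.
Proof.
have outerK : (w^T *m w) *m (w^T *m w) = dotp w w *: (w^T *m w).
  by rewrite mulmxA -(mulmxA w^T) dotp_mx mul_mx_scalar -scalemxAl.
set k := 2 / dotp w w.
have twice : k * k * dotp w w = 2 * k.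
  by rewrite /k -mulrA; have [->|?] := eqVneq (dotp w w) 0; [rewrite invr0 !mulr0 | field].
rewrite /householder -/k mulmxBl mul1mx mulmxBr mulmx1 -scalemxAl -scalemxAr.
rewrite outerK !scalerA twice; move: (w^T *m w) => M.
by apply/matrixP => i j; rewrite !mxE; clearbody k; ring.
Qed.

Lemma householder_mulmxK v w : v *m householder w *m householder w = v.
Proof. by rewrite -mulmxA householderK mulmx1. Qed.

Lemma dotp_householder u v w :
  dotp (u *m householder w) (v *m householder w) = dotp u v.
Proof. by rewrite dotp_mulmxr tr_householder householder_mulmxK. Qed.

Lemma householder_id v w : dotp v w = 0 -> v *m householder w = v.
Proof. by rewrite householderE => ->; rewrite mulr0 scale0r subr0. Qed.

Lemma dotp_householder_id a v w :
  dotp a w = 0 -> dotp a (v *m householder w) = dotp a v.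
Proof. by move=> aw; rewrite dotp_mulmxr tr_householder householder_id. Qed.

Lemma householder_swap u v :
  dotp u u = dotp v v -> u *m householder (u - v) = v.
Proof.
move=> uv; have [/eqP|uvNZ] := eqVneq (u - v) 0.
  by rewrite subr_eq0 => /eqP <-; rewrite householder_id // subrr dotpC /dotp mul0mx mxE.
have halve : dotp (u - v) (u - v) = 2 * dotp u (u - v).
  by rewrite !(dotpBl, dotpBr) (dotpC v u) -uv; ring.
have uuvNZ : dotp u (u - v) != 0.
  by apply: contraNneq uvNZ; rewrite -dotp_eq0 halve => ->; rewrite mulr0.
rewrite householderE.
have -> : 2 / dotp (u - v) (u - v) * dotp u (u - v) = 1 by rewrite halve; field.
by rewrite scale1r opprB addrC subrK.
Qed.

End Householder.

Section ReflectionAt.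
Variables (R : realType) (n : nat).
Implicit Types (c p u w x y : 'rV[R]_n.+1).

Definition reflect_at c w p := c + (p - c) *m householder w.

Lemma reflect_atBc c w p : reflect_at c w p - c = (p - c) *m householder w.
Proof. by rewrite /reflect_at addrAC subrr add0r. Qed.

Lemma reflect_atK c w : involutive (reflect_at c w).
Proof. by move=> p; rewrite {1}/reflect_at reflect_atBc householder_mulmxK addrC subrK. Qed.

Lemma orth_affine_reflect_at c w : orth_affine (reflect_at c w).
Proof.
exists (householder w), (c - c *m householder w); split.
  by rewrite tr_householder householderK.
by move=> p; rewrite /reflect_at mulmxBl addrCA addrA.
Qed.

Lemma enorm_householder u w : enorm (u *m householder w) = enorm u.
Proof. by rewrite /enorm dotp_householder. Qed.

Lemma hyperplane_reflect_at (H : set 'rV[R]_n.+1) c x y p :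
  affine_hyperplane H -> H c -> H x -> H y ->
  H (reflect_at c (x - y) p) <-> H p.
Proof.
move=> [a [b [_ ->]]] /= Hc Hx Hy.
have axy : dotp a (x - y) = 0 by rewrite dotpBr Hx Hy subrr.
by rewrite /reflect_at dotpDr dotp_householder_id // dotpBr Hc addrC subrK.
Qed.

Variables (s : nat) (V : 'I_s -> set 'rV[R]_n.+1) (alpha : set 'I_s).

Lemma Walpha_dotpB u x y :
  Valpha V alpha x -> Valpha V alpha y -> Walpha V alpha u -> dotp u (x - y) = 0.
Proof. by move=> Vx Vy; apply; exists x => //; exists y. Qed.

Lemma relbd_reflect_at c r x y w eps p :
  (x - c) *m householder w = y - c ->
  (forall u, Walpha V alpha u -> dotp u w = 0) ->
  relbd c r V alpha x eps p -> relbd c r V alpha y eps (reflect_at c w p).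
Proof.
move=> xy Ww [Sp [t [u [t0 Wu nu E]]]]; split.
  by rewrite /sphere /= reflect_atBc enorm_householder.
exists t, u; split => //.
by rewrite reflect_atBc E mulmxDl -scalemxAl xy (householder_id (Ww u Wu)).
Qed.

End ReflectionAt.

Theorem lemma5p2 (R : realType) (n s : nat) (c : 'rV[R]_n.+1) (r : R)
    (V : 'I_s -> set 'rV[R]_n.+1) :
  0 < r ->
  (forall i, affine_hyperplane (V i)) ->
  (forall i, V i c) ->
  forall x y : 'rV[R]_n.+1,
    sphere c r x -> sphere c r y ->
    Vcoll V x = Vcoll V y ->
    Salpha c r V (idx V x) y ->
    forall eps : R, 0 < eps ->
      isometric_strat (relbd c r V (idx V x) x eps) (Vcoll V x)
                      (relbd c r V (idx V x) y eps) (Vcoll V y).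
Proof.
move=> _ Vh Vc x y Sx Sy <- [_ Vy] eps _.
have xy : (x - c) *m householder (x - y) = y - c.
  have -> : x - y = (x - c) - (y - c) by rewrite opprB addrA subrK.
  by apply/householder_swap/enorm_eq_dotp; exact: etrans Sx (esym Sy).
have yx : (y - c) *m householder (x - y) = x - c by rewrite -xy householder_mulmxK.
have Wxy u : Walpha V (idx V x) u -> dotp u (x - y) = 0.
  by apply: Walpha_dotpB => // i.
exists id, (reflect_at c (x - y)); split.
- exact: (@bij _ _ (Vcoll V x) (Vcoll V x) idfun).
- exact: orth_affine_reflect_at.
- apply: image_involutive (reflect_atK _ _) _ _ => p bdp.
  + exact: relbd_reflect_at xy Wxy bdp.
  + exact: relbd_reflect_at yx Wxy bdp.
- move=> _ [i Vix <-]; have Viy := Vy i Vix.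
  have Vi_reflect p : V i (reflect_at c (x - y) p) <-> V i p.
    exact: hyperplane_reflect_at (Vh i) (Vc i) Vix Viy.
  apply: image_involutive (reflect_atK _ _) _ _ => p [bdp /Vi_reflect Vip].
  + by split; first exact: relbd_reflect_at xy Wxy bdp.
  + by split; first exact: relbd_reflect_at yx Wxy bdp.
Qed.
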